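(* Let $G$ be a non-archimedean Hausdorff topological group, $M$ a Hausdorff topological group, and $f:M\to G$ a continuous homomorphism which is an epimorphism in the category of Hausdorff topological groups. Then $f(M)$ is dense in $G$.
   Context: A topological group is non-archimedean if it has a local base at the identity consisting of open subgroups. $f$ is an epimorphism in the category of Hausdorff topological groups if for every Hausdorff topological group $F$ and all continuous homomorphisms $g,h:G\to F$, $g\circ f=h\circ f$ implies $g=h$. *)

Record TopGroup := {
  carrier :> Type;
  mul : carrier -> carrier -> carrier;
  inv : carrier -> carrier;
  one : carrier;
  mulA : forall x y z, mul x (mul y z) = mul (mul x y) z;
  mul1g : forall x, mul one x = x;
  mulg1 : forall x, mul x one = x;
  mulVg : forall x, mul (inv x) x = one;
  mulgV : forall x, mul x (inv x) = one;
  is_open : (carrier -> Prop) -> Prop;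
  open_full : is_open (fun _ => True);
  open_inter : forall U V, is_open U -> is_open V ->
      is_open (fun x => U x /\ V x);
  open_union : forall (Fam : (carrier -> Prop) -> Prop),
      (forall U, Fam U -> is_open U) ->
      is_open (fun x => exists U, Fam U /\ U x);
  (* continuity of multiplication w.r.t. the product topology on G x G:
     the preimage of an open W is a neighbourhood of each of its points,
     i.e. contains a basic open box U x V around it *)
  mul_continuous : forall W x y, is_open W -> W (mul x y) ->
      exists U V, is_open U /\ is_open V /\ U x /\ V y /\
        (forall a b, U a -> V b -> W (mul a b));
  inv_continuous : forall W, is_open W -> is_open (fun x => W (inv x))
}.

Arguments mul {t}.
Arguments inv {t}.
Arguments one {t}.
Arguments is_open {t}.

Definition hausdorff (G : TopGroup) : Prop :=
  forall x y : G, x <> y ->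
    exists U V, is_open U /\ is_open V /\ U x /\ V y /\
      (forall z, U z -> V z -> False).

Definition is_subgroup (G : TopGroup) (H : G -> Prop) : Prop :=
  H one /\ (forall x y, H x -> H y -> H (mul x y)) /\
  (forall x, H x -> H (inv x)).

Definition non_archimedean (G : TopGroup) : Prop :=
  forall U : G -> Prop, is_open U -> U one ->
    exists H : G -> Prop, is_subgroup G H /\ is_open H /\
      (forall x, H x -> U x).

Definition is_hom (A B : TopGroup) (f : A -> B) : Prop :=
  forall x y, f (mul x y) = mul (f x) (f y).

Definition continuous (A B : TopGroup) (f : A -> B) : Prop :=
  forall W : B -> Prop, is_open W -> is_open (fun x => W (f x)).

Definition cont_hom (A B : TopGroup) (f : A -> B) : Prop :=
  is_hom A B f /\ continuous A B f.

Definition epi_Haus (M G : TopGroup) (f : M -> G) : Prop :=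
  forall (F : TopGroup), hausdorff F ->
    forall g h : G -> F, cont_hom G F g -> cont_hom G F h ->
      (forall m, g (f m) = h (f m)) -> forall x, g x = h x.

Definition dense_image (M G : TopGroup) (f : M -> G) : Prop :=
  forall U : G -> Prop, is_open U -> (exists x, U x) -> exists m, U (f m).

From Stdlib Require Import List Classical ClassicalEpsilon FunctionalExtensionality
  PropExtensionality ProofIrrelevance Bool.

(* Let H be an open subgroup of G and x a point.  G acts on its left H-cosets,
   and this action is continuous into the symmetric group Sym(X) with the
   topology of pointwise convergence, a Hausdorff group.  Doubling the cosets
   by a flag and letting tau flip the flag of exactly those cosets that meet
   the subgroup f(M), tau commutes with the action of f(M); so the action
   rho and its conjugate tau rho tau agree on f(M).  They agree at x only if
   x H meets f(M), since H itself does.  Hence an epimorphism hits every coset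
   of every open subgroup, which for non-archimedean G is density. *)

Section GroupLemmas.
Variable T : TopGroup.
Implicit Types x y a b c : T.

Lemma mulKV x y : mul (mul x y) (inv y) = x.
Proof. rewrite <- mulA, mulgV, mulg1. reflexivity. Qed.

Lemma mulKg x y : mul (inv x) (mul x y) = y.
Proof. rewrite mulA, mulVg, mul1g. reflexivity. Qed.

Lemma inv_uniq a b : mul a b = one -> b = inv a.
Proof.
  intro E. rewrite <- (mul1g _ b), <- (mulVg _ a), <- mulA, E, mulg1. reflexivity.
Qed.

Lemma invK a : inv (inv a) = a.
Proof. symmetry. apply inv_uniq, mulVg. Qed.

Lemma invM a b : inv (mul a b) = mul (inv b) (inv a).
Proof.
  symmetry. apply inv_uniq.
  rewrite <- mulA, (mulA _ b), mulgV, mul1g, mulgV. reflexivity.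
Qed.

Lemma inv1 : inv (one (t := T)) = one.
Proof. symmetry. apply inv_uniq, mulg1. Qed.

Lemma open_ext (W W' : T -> Prop) : (forall x, W x <-> W' x) -> is_open W -> is_open W'.
Proof.
  intros E HW. replace W' with W; auto.
  apply functional_extensionality; intro x; apply propositional_extensionality; auto.
Qed.

Lemma open_nbhd (W : T -> Prop) :
  (forall x, W x -> exists V, is_open V /\ V x /\ forall y, V y -> W y) -> is_open W.
Proof.
  intros L.
  apply (open_ext (fun x => exists U, (is_open U /\ forall y, U y -> W y) /\ U x)).
  - intro x; split.
    + intros [U [[_ HU] Ux]]; auto.
    + intros Wx. destruct (L x Wx) as [V [HV [Vx HVW]]]. exists V; auto.
  - apply open_union. intros U [HU _]; exact HU.
Qed.

Lemma open_lmul c (W : T -> Prop) : is_open W -> is_open (fun z => W (mul c z)).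
Proof.
  intros HW. apply open_nbhd. intros z Wz.
  destruct (mul_continuous T W c z HW Wz) as [U [V [_ [HV [Uc [Vz HUV]]]]]].
  exists V; auto.
Qed.

Lemma open_rmul c (W : T -> Prop) : is_open W -> is_open (fun z => W (mul z c)).
Proof.
  intros HW. apply open_nbhd. intros z Wz.
  destruct (mul_continuous T W z c HW Wz) as [U [V [HU [_ [Uz [Vc HUV]]]]]].
  exists U; auto.
Qed.

Lemma conj_cont_hom (t : T) : cont_hom T T (fun z => mul (inv t) (mul z t)).
Proof.
  split.
  - intros y y'. rewrite !mulA, mulKV, <- !mulA. reflexivity.
  - intros W HW. apply (open_rmul t (fun w => W (mul (inv t) w))), open_lmul, HW.
Qed.
End GroupLemmas.

Lemma hom_one (A B : TopGroup) (f : A -> B) : is_hom A B f -> f one = one.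
Proof.
  intros Hf. assert (E : f one = mul (f one) (f one)) by (rewrite <- Hf, mul1g; reflexivity).
  rewrite <- (mulKg B (f one) (f one)), <- E, mulVg. reflexivity.
Qed.

Lemma hom_inv (A B : TopGroup) (f : A -> B) a : is_hom A B f -> f (inv a) = inv (f a).
Proof. intros Hf. apply inv_uniq. rewrite <- Hf, mulgV. apply hom_one, Hf. Qed.

Lemma cont_hom_comp (A B C : TopGroup) (f : A -> B) (g : B -> C) :
  cont_hom A B f -> cont_hom B C g -> cont_hom A C (fun x => g (f x)).
Proof.
  intros [fM fC] [gM gC]. split.
  - intros x y. rewrite fM, gM. reflexivity.
  - intros W HW. apply (fC (fun y => W (g y))), gC, HW.
Qed.

Lemma image_subgroup (M G : TopGroup) (f : M -> G) :
  is_hom M G f -> is_subgroup G (fun z => exists m, f m = z).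
Proof.
  intros Hf. split; [|split].
  - exists one. apply hom_one, Hf.
  - intros a b [m <-] [n <-]. exists (mul m n). apply Hf.
  - intros a [m <-]. exists (inv m). apply hom_inv, Hf.
Qed.

Section Symmetric.
Variable X : Type.

Record perm := Perm {
  pf : X -> X; pg : X -> X;
  pK : forall x, pg (pf x) = x; pK' : forall x, pf (pg x) = x }.

Lemma perm_ext (s r : perm) : (forall x, pf s x = pf r x) -> s = r.
Proof.
  intros H. destruct s as [f1 g1 K1 K1'], r as [f2 g2 K2 K2']; simpl in *.
  assert (Ef : f1 = f2) by (apply functional_extensionality; exact H).
  subst f2.
  assert (Eg : g1 = g2).
  { apply functional_extensionality; intro x. rewrite <- (K2 (g1 x)), K1'. reflexivity. }
  subst g2. f_equal; apply proof_irrelevance.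
Qed.

Definition pmul (s r : perm) : perm.
Proof.
  refine (Perm (fun x => pf s (pf r x)) (fun x => pg r (pg s x)) _ _); intro x.
  - rewrite !pK. reflexivity.
  - rewrite !pK'. reflexivity.
Defined.

Definition pinv (s : perm) : perm := Perm (pg s) (pf s) (pK' s) (pK s).
Definition pone : perm := Perm (fun x => x) (fun x => x) (fun _ => eq_refl) (fun _ => eq_refl).

Lemma pmulA x y z : pmul x (pmul y z) = pmul (pmul x y) z.
Proof. apply perm_ext. reflexivity. Qed.
Lemma pmul1g x : pmul pone x = x.
Proof. apply perm_ext. reflexivity. Qed.
Lemma pmulg1 x : pmul x pone = x.
Proof. apply perm_ext. reflexivity. Qed.
Lemma pmulVg x : pmul (pinv x) x = pone.
Proof. apply perm_ext, pK. Qed.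
Lemma pmulgV x : pmul x (pinv x) = pone.
Proof. apply perm_ext, pK'. Qed.

(* Topology of pointwise convergence, X carrying the discrete topology. *)
Definition pointwise_open (W : perm -> Prop) : Prop :=
  forall s, W s -> exists l, forall r, (forall p, In p l -> pf r p = pf s p) -> W r.

Lemma pointwise_open_agree s l :
  pointwise_open (fun r => forall p, In p l -> pf r p = pf s p).
Proof. intros s' Hs'. exists l. intros r Hr p Hp. rewrite Hr by auto. auto. Qed.

Lemma pointwise_open_full : pointwise_open (fun _ => True).
Proof. intros s _. exists nil. auto. Qed.

Lemma pointwise_open_inter U V :
  pointwise_open U -> pointwise_open V -> pointwise_open (fun x => U x /\ V x).
Proof.
  intros HU HV s [Us Vs]. destruct (HU s Us) as [l1 H1], (HV s Vs) as [l2 H2].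
  exists (l1 ++ l2). intros r Hr. split.
  - apply H1. intros p Hp. apply Hr, in_or_app; auto.
  - apply H2. intros p Hp. apply Hr, in_or_app; auto.
Qed.

Lemma pointwise_open_union (Fam : (perm -> Prop) -> Prop) :
  (forall U, Fam U -> pointwise_open U) ->
  pointwise_open (fun x => exists U, Fam U /\ U x).
Proof.
  intros HF s [U [FU Us]]. destruct (HF U FU s Us) as [l Hl]. exists l.
  intros r Hr. exists U. auto.
Qed.

Lemma pmul_continuous W s r : pointwise_open W -> W (pmul s r) ->
  exists U V, pointwise_open U /\ pointwise_open V /\ U s /\ V r /\
    (forall a b, U a -> V b -> W (pmul a b)).
Proof.
  intros HW Hw. destruct (HW _ Hw) as [l Hl].
  exists (fun a => forall p, In p (map (pf r) l) -> pf a p = pf s p),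
         (fun b => forall p, In p l -> pf b p = pf r p).
  repeat split; try apply pointwise_open_agree; auto.
  intros a b Ha Hb. apply Hl. intros p Hp. simpl. rewrite Hb by auto. apply Ha, in_map, Hp.
Qed.

Lemma pinv_continuous W : pointwise_open W -> pointwise_open (fun x => W (pinv x)).
Proof.
  intros HW s Hs. destruct (HW _ Hs) as [l Hl]. exists (map (pg s) l).
  intros r Hr. apply Hl. intros p Hp. simpl.
  rewrite <- (pK' s p) at 1. rewrite <- (Hr (pg s p)) by (apply in_map; auto).
  apply pK.
Qed.

Definition Sym : TopGroup := {|
  carrier := perm; mul := pmul; inv := pinv; one := pone;
  mulA := pmulA; mul1g := pmul1g; mulg1 := pmulg1; mulVg := pmulVg; mulgV := pmulgV;
  is_open := pointwise_open; open_full := pointwise_open_full;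
  open_inter := pointwise_open_inter; open_union := pointwise_open_union;
  mul_continuous := pmul_continuous; inv_continuous := pinv_continuous |}.

Lemma Sym_hausdorff : hausdorff Sym.
Proof.
  intros s r Hne.
  destruct (not_all_ex_not _ _ (fun E => Hne (perm_ext s r E))) as [p Hp].
  exists (fun a : perm => pf a p = pf s p), (fun a : perm => pf a p = pf r p).
  repeat split; auto.
  - intros a Ha. exists (p :: nil). intros b Hb. rewrite Hb by (left; auto). exact Ha.
  - intros a Ha. exists (p :: nil). intros b Hb. rewrite Hb by (left; auto). exact Ha.
  - intros z E1 E2. apply Hp. rewrite <- E1, <- E2. reflexivity.
Qed.
End Symmetric.

Arguments pf {X}.

Section Action.
Variables (G : TopGroup) (X : Type) (act : G -> X -> X).
Hypothesis act_mul : forall y y' p, act (mul y y') p = act y (act y' p).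
Hypothesis act_one : forall p, act one p = p.
Hypothesis act_locally_constant : forall y p,
  exists V, is_open V /\ V y /\ forall y', V y' -> act y' p = act y p.

Definition perm_of_act (y : G) : perm X.
Proof.
  refine (Perm X (act y) (act (inv y)) _ _); intro p.
  - rewrite <- act_mul, mulVg, act_one. reflexivity.
  - rewrite <- act_mul, mulgV, act_one. reflexivity.
Defined.

Lemma act_locally_constant_list l y : exists V, is_open V /\ V y /\
  forall y', V y' -> forall p, In p l -> act y' p = act y p.
Proof.
  induction l as [|p l [V [HV [Vy HVl]]]].
  - exists (fun _ => True). split; [apply open_full|]. split; auto. intros _ _ p [].
  - destruct (act_locally_constant y p) as [V' [HV' [V'y HV'p]]].
    exists (fun x => V' x /\ V x). split; [apply open_inter; auto|]. split; auto.
    intros y' [A B] q [<-|Hq]; auto.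
Qed.

Lemma perm_of_act_cont_hom : cont_hom G (Sym X) perm_of_act.
Proof.
  split.
  - intros y y'. apply perm_ext. intro p. apply act_mul.
  - intros W HW. apply open_nbhd. intros y Wy.
    destruct (HW _ Wy) as [l Hl].
    destruct (act_locally_constant_list l y) as [V [HV [Vy HVl]]].
    exists V. repeat split; auto. intros y' Vy'. apply Hl. intros p Hp. apply HVl; auto.
Qed.
End Action.

Section CosetAction.
Variables (G : TopGroup) (H : G -> Prop).
Hypothesis H_subgroup : is_subgroup G H.
Hypothesis H_open : is_open H.

Definition left_coset (S : G -> Prop) := exists a, S = fun z => H (mul (inv a) z).
Definition transl (y : G) (S : G -> Prop) : G -> Prop := fun z => S (mul (inv y) z).

(* Sets that are not left H-cosets are fixed, which makes the action total
   on the type of all subsets of G. *)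
Definition coset_act (y : G) (S : G -> Prop) : G -> Prop :=
  if excluded_middle_informative (left_coset S) then transl y S else S.

Lemma transl_mul y y' S : transl (mul y y') S = transl y (transl y' S).
Proof.
  apply functional_extensionality; intro z. unfold transl. rewrite invM, <- mulA. reflexivity.
Qed.

Lemma transl_one S : transl one S = S.
Proof.
  apply functional_extensionality; intro z. unfold transl. rewrite inv1, mul1g. reflexivity.
Qed.

Lemma left_coset_transl y S : left_coset S -> left_coset (transl y S).
Proof.
  intros [a ->]. exists (mul y a). apply functional_extensionality; intro z.
  unfold transl. rewrite invM, <- mulA. reflexivity.
Qed.

Lemma coset_act_mul y y' S : coset_act (mul y y') S = coset_act y (coset_act y' S).
Proof.
  unfold coset_act.
  destruct (excluded_middle_informative (left_coset S)) as [c|c].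
  - destruct (excluded_middle_informative (left_coset (transl y' S))) as [_|c'].
    + apply transl_mul.
    + contradiction (c' (left_coset_transl y' S c)).
  - destruct (excluded_middle_informative (left_coset S)); [contradiction | reflexivity].
Qed.

Lemma coset_act_one S : coset_act one S = S.
Proof.
  unfold coset_act. destruct (excluded_middle_informative (left_coset S));
  [apply transl_one | reflexivity].
Qed.

(* The stabiliser of the coset a H is the open subgroup a H a^-1; here it is
   translated to the neighbourhood y a H a^-1 of y. *)
Lemma coset_act_locally_constant y S :
  exists V, is_open V /\ V y /\ forall y', V y' -> coset_act y' S = coset_act y S.
Proof.
  destruct H_subgroup as [H1 [Hmul _]].
  destruct (classic (left_coset S)) as [[a ->] | c].
  - exists (fun y' => H (mul (inv a) (mul (inv y) (mul y' a)))).
    split; [|split].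
    + apply (open_rmul G a (fun w => H (mul (inv a) (mul (inv y) w)))).
      apply (open_lmul G (inv y) (fun v => H (mul (inv a) v))), open_lmul, H_open.
    + rewrite mulKg, mulVg. exact H1.
    + intros y' Hy'. unfold coset_act.
      destruct (excluded_middle_informative _) as [_|c]; [|reflexivity].
      apply functional_extensionality; intro z. unfold transl.
      apply propositional_extensionality. split; intro Hz.
      * replace (mul (inv a) (mul (inv y) z))
          with (mul (mul (inv a) (mul (inv y) (mul y' a))) (mul (inv a) (mul (inv y') z)))
          by (rewrite !mulA, !mulKV; reflexivity).
        apply Hmul; auto.
      * replace (mul (inv a) (mul (inv y') z))
          with (mul (inv (mul (inv a) (mul (inv y) (mul y' a)))) (mul (inv a) (mul (inv y) z)))
          by (rewrite !invM, !invK, !mulA, !mulKV; reflexivity).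
        apply Hmul; auto. apply H_subgroup; auto.
  - exists (fun _ => True). split; [apply open_full|]. split; auto.
    intros y' _. unfold coset_act.
    destruct (excluded_middle_informative (left_coset S)); [contradiction | reflexivity].
Qed.

Definition flagged_act (y : G) (p : (G -> Prop) * bool) : (G -> Prop) * bool :=
  (coset_act y (fst p), snd p).

Lemma flagged_act_mul y y' p : flagged_act (mul y y') p = flagged_act y (flagged_act y' p).
Proof. unfold flagged_act. simpl. rewrite coset_act_mul. reflexivity. Qed.

Lemma flagged_act_one p : flagged_act one p = p.
Proof. unfold flagged_act. rewrite coset_act_one. destruct p; reflexivity. Qed.

Lemma flagged_act_locally_constant y p :
  exists V, is_open V /\ V y /\ forall y', V y' -> flagged_act y' p = flagged_act y p.
Proof.
  destruct (coset_act_locally_constant y (fst p)) as [V [HV [Vy HVc]]].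
  exists V. repeat split; auto. intros y' Vy'. unfold flagged_act. rewrite HVc; auto.
Qed.

Definition rho : G -> Sym ((G -> Prop) * bool) :=
  perm_of_act G _ flagged_act flagged_act_mul flagged_act_one.

Lemma rho_cont_hom : cont_hom G (Sym _) rho.
Proof. apply perm_of_act_cont_hom, flagged_act_locally_constant. Qed.

Variable I : G -> Prop.
Hypothesis I_subgroup : is_subgroup G I.

Definition meets_I (S : G -> Prop) : bool :=
  if excluded_middle_informative (exists w, I w /\ S w) then true else false.

Definition flip (p : (G -> Prop) * bool) : (G -> Prop) * bool :=
  (fst p, xorb (snd p) (meets_I (fst p))).

Lemma flipK p : flip (flip p) = p.
Proof.
  destruct p as [S b]. unfold flip. simpl.
  rewrite xorb_assoc, xorb_nilpotent, xorb_false_r. reflexivity.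
Qed.

Definition tau : Sym ((G -> Prop) * bool) := Perm _ flip flip flipK flipK.

Lemma meets_I_transl c S : I c -> meets_I (transl c S) = meets_I S.
Proof.
  destruct I_subgroup as [_ [Imul Iinv]]. intros Ic. unfold meets_I.
  destruct (excluded_middle_informative (exists w, I w /\ S w)) as [e|e];
  destruct (excluded_middle_informative (exists w, I w /\ transl c S w)) as [e'|e']; auto.
  - destruct e as [w [Iw Sw]]. contradiction e'. exists (mul c w). split; auto.
    unfold transl. rewrite mulKg. exact Sw.
  - destruct e' as [w [Iw Sw]]. contradiction e. exists (mul (inv c) w). auto.
Qed.

Lemma flip_act_comm c p : I c -> flagged_act c (flip p) = flip (flagged_act c p).
Proof.
  intros Ic. destruct p as [S b]. unfold flagged_act, flip, coset_act. simpl.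
  destruct (excluded_middle_informative (left_coset S)); [|reflexivity].
  rewrite meets_I_transl; auto.
Qed.

Definition twisted_rho (y : G) : Sym _ := mul (inv tau) (mul (rho y) tau).

Lemma twisted_rho_cont_hom : cont_hom G (Sym _) twisted_rho.
Proof.
  apply (cont_hom_comp _ _ _ rho (fun z => mul (inv tau) (mul z tau))).
  - apply rho_cont_hom.
  - apply conj_cont_hom.
Qed.

Lemma twisted_rho_agree c : I c -> twisted_rho c = rho c.
Proof.
  intros Ic. apply perm_ext. intro p. simpl. rewrite flip_act_comm by auto. apply flipK.
Qed.

Lemma twisted_rho_differ x : (forall u, H u -> ~ I (mul x u)) -> twisted_rho x <> rho x.
Proof.
  destruct H_subgroup as [H1 _]. destruct I_subgroup as [I1 _].
  intros Hx E. assert (E2 := f_equal (fun s => pf s (H, false)) E). simpl in E2.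
  unfold flagged_act, flip, coset_act in E2. simpl in E2.
  assert (cH : left_coset H).
  { exists one. apply functional_extensionality; intro z. rewrite inv1, mul1g. reflexivity. }
  destruct (excluded_middle_informative (left_coset H)) as [_|n]; [|contradiction].
  unfold meets_I in E2.
  destruct (excluded_middle_informative (exists w, I w /\ H w)) as [_|e].
  2: { apply e. exists one. auto. }
  destruct (excluded_middle_informative (exists w, I w /\ transl x H w)) as [[w [Iw Hw]]|_].
  - apply (Hx _ Hw). unfold transl. rewrite mulA, mulgV, mul1g. exact Iw.
  - discriminate E2.
Qed.
End CosetAction.

Lemma epi_image_meets_open_cosets (M G : TopGroup) (f : M -> G) (H : G -> Prop) x :
  cont_hom M G f -> epi_Haus M G f -> is_subgroup G H -> is_open H ->
  exists u m, H u /\ f m = mul x u.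
Proof.
  intros [fhom fcont] Epi Hsub Hopen.
  apply NNPP; intro Hno.
  set (I := fun z : G => exists m, f m = z).
  apply (twisted_rho_differ G H Hsub I (image_subgroup M G f fhom) x).
  - intros u Hu [m Em]. apply Hno. exists u, m. auto.
  - apply (Epi _ (Sym_hausdorff _)).
    + apply twisted_rho_cont_hom; auto.
    + apply rho_cont_hom; auto.
    + intro m. apply twisted_rho_agree; [apply image_subgroup; auto | exists m; reflexivity].
Qed.

Theorem theorem6p7 (G M : TopGroup) (f : M -> G) :
  non_archimedean G -> hausdorff G -> hausdorff M ->
  cont_hom M G f -> epi_Haus M G f -> dense_image M G f.
Proof.
  intros NA _ _ Hf Epi U HU [x Ux].
  destruct (NA (fun z => U (mul x z))) as [H [Hsub [Hopen HxU]]].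
  { apply open_lmul, HU. }
  { rewrite mulg1. exact Ux. }
  destruct (epi_image_meets_open_cosets M G f H x Hf Epi Hsub Hopen) as [u [m [Hu Em]]].
  exists m. rewrite Em. apply HxU, Hu.
Qed.
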